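(* Let $d\geq 2$ and $n\geq d+2$. Let $\mathsf{B}^{d+1}_n$ be the simplicial complex whose facets are $\{i,i+1,\dots,i+d+1\}$ for $i=1,\dots,n-d-1$ (a stacked $(d+1)$-ball), and let $\mathsf{K}^d_n=\partial\mathsf{B}^{d+1}_n$, whose facet hypergraph is $$\mathcal{F}(\mathsf{K}^d_n)=\{g\setminus\{w\}: g\in\mathcal{F}(\mathsf{B}^{d+1}_n),\ w\in g\setminus\{\max g,\min g\}\}\cup\{\{1,\dots,d+1\},\{n-d,\dots,n\}\}.$$ Then: (i) if $n=(d+2)k$ for an integer $k\geq 1$, then $\tau(\mathcal{F}(\mathsf{B}^{d+1}_n))=\frac{n}{d+2}$; (ii) if $n=(d+3)k$ for an integer $k\geq 1$, then $\tau(\mathcal{F}(\mathsf{K}^d_n))=\frac{2n}{d+3}$.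
   Context: $\mathcal{F}(\cdot)$ denotes the facet hypergraph; $\tau(\mathcal{H})$ is the minimum size of a set of vertices meeting every hyperedge of $\mathcal{H}$. *)

From mathcomp Require Import all_boot.
Set Implicit Arguments. Unset Strict Implicit. Unset Printing Implicit Defensive.

(* Vertices are 1..n, represented in 'I_n.+1 (the value 0 is an extra
   isolated vertex lying in no edge; it does not affect tau). *)

Definition ival (n a b : nat) : {set 'I_n.+1} :=
  [set x : 'I_n.+1 | (a <= x) && (x <= b)].

Definition facetsB (d n : nat) : {set {set 'I_n.+1}} :=
  [set ival n i (i + d + 1) | i : 'I_n.+1 & (1 <= i) && (i <= n - d - 1)].

Definition facetsK (d n : nat) : {set {set 'I_n.+1}} :=
  [set ival n (nat_of_ord i) (i + d + 1) :\ w | i in 'I_n.+1, w in 'I_n.+1 &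
      [&& 1 <= nat_of_ord i, i <= n - d - 1, i < nat_of_ord w & nat_of_ord w < i + d + 1]]
  :|: [set ival n 1 (d + 1); ival n (n - d) n].

Definition transversal (T : finType) (H : {set {set T}}) (S : {set T}) : bool :=
  [forall e in H, e :&: S != set0].

(* transversal number: minimum size of a transversal
   (defaults to #|T| if none exists, which does not occur here) *)
Definition tau (T : finType) (H : {set {set T}}) : nat :=
  \big[minn/#|T|]_(S : {set T} | transversal H S) #|S|.

(* A transversal of B is the residue class of -1 modulo d + 2: every facet is a window of
   d + 2 consecutive vertices, while the n / (d + 2) disjoint facets [m(d+2)+1, (m+1)(d+2)]
   each need their own vertex.  For K = dB the residue classes 2 and 3 modulo d + 3 form a
   transversal.  Conversely, any transversal of K has two vertices in every window of d + 3
   consecutive vertices: it meets the first facet of the window, punctured at its second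
   vertex, in some y, and the next facet, punctured at y (or at its second vertex when y is
   the first vertex of the window), in a second vertex. *)

From Pilot Require Import Defs.
From mathcomp Require Import all_boot zify.
Set Implicit Arguments. Unset Strict Implicit. Unset Printing Implicit Defensive.

Section TransversalNumber.

Variables (T : finType) (H : {set {set T}}).

Lemma tau_leq_card (S : {set T}) : Defs.transversal H S -> tau H <= #|S|.
Proof.
rewrite /tau; have : S \in index_enum {set T} by rewrite mem_index_enum.
elim: (index_enum _) => //= S' r IHr; rewrite inE big_cons => /orP [/eqP <- -> | Sr tS].
  exact: geq_minl.
by case: ifP => _; rewrite ?geq_min IHr ?orbT.
Qed.

Lemma tau_geq m : m <= #|T| -> (forall S, Defs.transversal H S -> m <= #|S|) -> m <= tau H.
Proof.
move=> mT mS; apply: (big_ind (fun v => m <= v)) => // x y mx my.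
by rewrite leq_min mx my.
Qed.

Lemma transversal_meet (S e : {set T}) :
  Defs.transversal H S -> e \in H -> exists2 x, x \in S & x \in e.
Proof.
move=> /forall_inP tS /tS /set0Pn [x]; rewrite inE => /andP [xe xS].
by exists x.
Qed.

End TransversalNumber.

Lemma mem_ival n a b (x : 'I_n.+1) : (x \in ival n a b) = (a <= x <= b).
Proof. by rewrite inE. Qed.

Lemma ival_inord_meet n (P : pred nat) (e : {set 'I_n.+1}) x :
  x <= n -> inord x \in e -> P x -> e :&: [set y : 'I_n.+1 | P y] != set0.
Proof.
move=> xn xe Px; apply/set0Pn; exists (inord x).
by rewrite !inE xe inordK.
Qed.

Lemma mem_ival_setD1_inord n a b (w : 'I_n.+1) x :
  x <= n -> (inord x \in ival n a b :\ w) = (x != w) && (a <= x <= b).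
Proof. by move=> xn; rewrite !inE -val_eqE /= inordK. Qed.

Lemma card_geq_blocks n (S : {set 'I_n.+1}) p c k :
  (forall m, m < k -> c <= #|S :&: ival n (m * p).+1 (m * p + p)|) -> c * k <= #|S|.
Proof.
move=> blocks; apply: leq_trans (subset_leq_card (subsetIl S (ival n 1 (k * p)))).
elim: k blocks => [|k IHk] blocks; first by rewrite muln0.
have -> : S :&: ival n 1 (k.+1 * p) =
          (S :&: ival n 1 (k * p)) :|: (S :&: ival n (k * p).+1 (k * p + p)).
  by apply/setP=> x; rewrite !inE -andb_orr; congr (_ && _); apply/idP/idP; lia.
have disj : (S :&: ival n 1 (k * p)) :&: (S :&: ival n (k * p).+1 (k * p + p)) = set0.
  by apply/setP=> x; rewrite !inE; apply/idP/idP; lia.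
rewrite cardsU disj cards0 subn0 mulnS addnC.
by rewrite leq_add ?blocks ?IHk // => m mk; apply: blocks; lia.
Qed.

Section ResidueClasses.

Variable p : nat.

Definition residue_class n r : {set 'I_n.+1} := [set x : 'I_n.+1 | x %% p == r].

Lemma residue_in_window i r : r < p -> exists2 x, i <= x < i + p & x %% p = r.
Proof.
move=> rp; have p0 : 0 < p by lia.
have [le_ri | lt_ri] := leqP (i %% p) r.
  exists (i %/ p * p + r); last by rewrite modnMDl modn_small.
  by have := divn_eq i p; lia.
exists ((i %/ p).+1 * p + r); last by rewrite modnMDl modn_small.
by rewrite mulSn; have := divn_eq i p; have := ltn_pmod i p0; lia.
Qed.

Lemma residue_succ x r : x %% p = r -> r.+1 < p -> x.+1 %% p = r.+1.
Proof. by move=> xr rp; rewrite -addn1 -modnDml xr addn1 modn_small. Qed.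

Lemma card_residue_class n k r : 0 < r < p -> n <= k * p -> #|residue_class n r| <= k.
Proof.
move=> /andP [r0 rp] nkp.
suff /subset_leq_card : residue_class n r \subset [set inord (m * p + r) | m : 'I_k].
  by move/leq_trans; apply; rewrite (leq_trans (leq_imset_card _ _)) ?card_ord.
apply/subsetP=> x; rewrite inE => /eqP xr.
have xq := divn_eq x p; rewrite xr in xq.
have qk : x %/ p < k by rewrite -(ltn_pmul2r (ltn_trans r0 rp)); have := ltn_ord x; lia.
by apply/imsetP; exists (Ordinal qk); rewrite //= -xq inord_val.
Qed.

End ResidueClasses.

Lemma facetsB_transversal d n : Defs.transversal (facetsB d n) (residue_class (d + 2) n (d + 1)).
Proof.
apply/forall_inP=> e /imsetP [i]; rewrite inE => /andP [i1 id] ->.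
have [x /andP [ix xi] xr] := residue_in_window i (ltac:(lia) : d + 1 < d + 2).
by apply: (@ival_inord_meet _ (fun y => y %% (d + 2) == d + 1) _ x);
  rewrite ?mem_ival ?inordK ?xr ?eqxx //; lia.
Qed.

Lemma facetB_block d n m : m * (d + 2) + (d + 2) <= n ->
  ival n (m * (d + 2)).+1 (m * (d + 2) + (d + 2)) \in facetsB d n.
Proof.
move=> mn; apply/imsetP; exists (inord (m * (d + 2)).+1); first by rewrite inE inordK; lia.
by rewrite inordK; [congr ival; lia | lia].
Qed.

Lemma tau_facetsB d n k : n = (d + 2) * k -> tau (facetsB d n) = k.
Proof.
move=> en; apply/eqP; rewrite eqn_leq; apply/andP; split.
  apply: leq_trans (tau_leq_card (facetsB_transversal d n)) _.
  by apply: card_residue_class; [lia | rewrite en mulnC].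
apply: tau_geq; first by rewrite card_ord en ltnW // ltnS leq_pmull // addn2.
move=> S tS; rewrite -[k]mul1n; apply: (card_geq_blocks (p := d + 2)) => m mk.
have mn : m * (d + 2) + (d + 2) <= n by rewrite en -mulSnr [_ * k]mulnC leq_mul2r mk orbT.
have [x xS xe] := transversal_meet tS (facetB_block mn).
by rewrite card_gt0; apply/set0Pn; exists x; rewrite inE xS.
Qed.

Lemma facetK_punctured d n (i w : 'I_n.+1) :
  1 <= i <= n - d - 1 -> i < w < i + d + 1 -> ival n i (i + d + 1) :\ w \in facetsK d n.
Proof.
move=> hi hw; apply/setUP; left; apply/imset2P.
by apply: (@Imset2spec _ _ _ _ _ _ _ i w) => //; rewrite inE /=; lia.
Qed.

Lemma transversal_facetsK_punctured d n (S : {set 'I_n.+1}) (i w : nat) :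
  Defs.transversal (facetsK d n) S -> 1 <= i <= n - d - 1 -> i < w < i + d + 1 ->
  exists2 y : 'I_n.+1, y \in S & [&& i <= y, y <= i + d + 1 & y != w :> nat].
Proof.
move=> tS hi hw.
have /(transversal_meet tS) [y yS] : ival n i (i + d + 1) :\ inord w \in facetsK d n.
  by move: (@facetK_punctured d n (inord i) (inord w)); rewrite !inordK; [apply | lia..].
rewrite !inE => /andP [yw yi]; exists y => //.
have yw' : y != w :> nat by apply: contra yw => /eqP <-; rewrite inord_val.
by rewrite yw' andbT.
Qed.

Lemma transversal_facetsK_window d n (S : {set 'I_n.+1}) j :
  0 < d -> Defs.transversal (facetsK d n) S -> j + d + 3 <= n ->
  2 <= #|S :&: ival n j.+1 (j + d + 3)|.
Proof.
move=> d0 tS jn.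
have [y yS /and3P [y1 y2 yw]] := transversal_facetsK_punctured (i := j + 1) (w := j + 2) tS
  ltac:(lia) ltac:(lia).
have [z zS /and3P [z1 z2 zw]] := transversal_facetsK_punctured (i := j + 2)
  (w := maxn y (j + 3)) tS ltac:(lia) ltac:(lia).
apply/card_gt1P; exists y, z; rewrite !inE yS zS /=; split; try lia.
by apply/eqP=> yz; move: z1 zw; rewrite -yz; lia.
Qed.

Lemma facetsK_transversal d n k : 0 < d -> 0 < k -> n = (d + 3) * k ->
  Defs.transversal (facetsK d n) (residue_class (d + 3) n 2 :|: residue_class (d + 3) n 3).
Proof.
move=> d0 k0 en; have pn : d + 3 <= n by rewrite en leq_pmulr.
set p := d + 3.
have -> : residue_class p n 2 :|: residue_class p n 3 = [set y : 'I_n.+1 | y %% p \in [:: 2; 3]].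
  by apply/setP=> y; rewrite !inE.
have meet e x := @ival_inord_meet n (fun y => y %% p \in [:: 2; 3]) e x.
apply/forall_inP=> e; case/setUP.
  case/imset2P=> i w _; rewrite inE => /and4P [i1 id iw wd] ->.
  have [x /andP [ix xi] xr] := residue_in_window i (ltac:(lia) : 2 < p).
  (* the window i .. i + d + 2 has a vertex x of residue 2; if x is the puncture or lies
     just beyond the facet, then x + 1 or the first vertex i has residue 3 *)
  have [xw | xw] := eqVneq x w.
    by apply: (meet _ x.+1); rewrite ?mem_ival_setD1_inord ?(residue_succ xr) //; lia.
  have [xtop | xd] := eqVneq x (i + d + 2).
    have ir : i %% p = 3.
      by rewrite -(modnDr i p) (_ : i + p = x.+1) ?(residue_succ xr) //; lia.
    by apply: (meet _ i); rewrite ?mem_ival_setD1_inord ?ir //; lia.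
  by apply: (meet _ x); rewrite ?mem_ival_setD1_inord ?xr //; lia.
case/set2P=> ->; first by apply: (meet _ 2); rewrite ?mem_ival ?inordK ?modn_small //; lia.
have nd : n - d = k.-1 * p + 3 by rewrite en -(prednK k0) mulnS /p; lia.
by rewrite nd; apply: (meet _ (k.-1 * p + 3));
  rewrite ?mem_ival ?inordK ?modnMDl ?modn_small //; lia.
Qed.

Lemma tau_facetsK d n k : 0 < d -> 0 < k -> n = (d + 3) * k -> tau (facetsK d n) = 2 * k.
Proof.
move=> d0 k0 en; apply/eqP; rewrite eqn_leq; apply/andP; split.
  apply: leq_trans (tau_leq_card (facetsK_transversal d0 k0 en)) _.
  rewrite mul2n -addnn (leq_trans (leq_card_setU _ _)) // leq_add //;
    by apply: card_residue_class; [lia | rewrite en mulnC].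
apply: tau_geq; first by rewrite card_ord en ltnW // ltnS leq_mul2r; lia.
move=> S tS; apply: (card_geq_blocks (p := d + 3)) => m mk.
have mn : m * (d + 3) + (d + 3) <= n by rewrite en -mulSnr [_ * k]mulnC leq_mul2r mk orbT.
have := transversal_facetsK_window (j := m * (d + 3)) d0 tS ltac:(lia).
by rewrite addnA.
Qed.

Theorem mainTheorem10 (d n : nat) :
  2 <= d -> d + 2 <= n ->
  (forall k : nat, 1 <= k -> n = (d + 2) * k -> tau (facetsB d n) = k) /\
  (forall k : nat, 1 <= k -> n = (d + 3) * k -> tau (facetsK d n) = 2 * k).
Proof.
move=> d2 _; split=> k k1 en; first exact: tau_facetsB.
by apply: tau_facetsK; lia.
Qed.
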